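(* Let $p$ be a prime and $A_*$ a graded commutative $\mathbb F_p$-algebra. (1) The kernel $G_p^{ab}(A_* )$ of $\rho_0:G_p(A_* )\to G_p^{\langle1\rangle}(A_* )$ is the subgroup $\{\alpha(X)=X+\sum_{i\ge1}\alpha_iX^{p^i}\in G_p(A_* )\mid\alpha_i^p=0\text{ for }i\ge1\}$. (2) The kernel $G_p^{[1]}(A_* )$ of $\rho_1:G_p^{\langle1\rangle}(A_* )\to G_p^{\langle2\rangle}(A_* )$ is the subgroup $\{\alpha(X)=\alpha_0X+\sum_{i\ge1}\alpha_iX^{p^i}\in G_p^{\langle1\rangle}(A_* )\mid\alpha_i^p=0\text{ for }i\ge1\}$. (3) For $k\ge2$, the kernel $G_p^{[k]}(A_* )$ of $\rho_k:G_p^{\langle k\rangle}(A_* )\to G_p^{\langle k+1\rangle}(A_* )$ is the subgroup $\{\alpha(X)=X+\sum_{i\ge1}\alpha_iX^{p^i}\in G_p^{\langle k\rangle}(A_* )\mid\alpha_i^p=0\text{ for }i\ge1\}$.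
   Context: Graded commutative means $ab=(-1)^{\deg a\deg b}ba$. $G_p(A_* )$: for $p=2$ the power series $\sum_{i\ge0}\alpha_iX^{2^i}\in A_*[[X]]$ ($\deg X=-1$) with $\alpha_i\in A_{2^i-1}$, $\alpha_0=1$; for $p$ odd ($\deg\epsilon=-1$, $\epsilon^2=0$, $\deg X=-2$) the series $\sum_{i\ge0}\alpha_iX^{p^i}$ with $\alpha_i\in A_*[\epsilon]/(\epsilon^2)$ of degree $2(p^i-1)$, $\alpha_0-1\in(\epsilon)$; product $\alpha\cdot\beta=\beta(\alpha(X))$. $G_p^{\langle k\rangle}(A_* )$, $k\ge1$: for $p=2$ or $k\ge2$, series $\sum_{i\ge0}\alpha_iX^{p^i}\in A_*[[X]]$ with $\deg\alpha_i=2^{i+k}-2^k$ (resp. $2(p^{i+k}-p^k)$), $\alpha_0=1$, product $\beta(\alpha(X))$; for $p$ odd and $k=1$, series $\sum_{i\ge0}\alpha_iX^{p^i}$ ($\deg X=-2p$) with $\alpha_0\in A_*[\epsilon]/(\epsilon^2)$, $\alpha_0-1\in(\epsilon)$, $\alpha_i\in A_*$ of degree $2(p^{i+1}-p)$ for $i\ge1$, product $\hat q(\beta(\alpha(X)))$ where $\hat q(\sum\gamma_iX^{p^i})=\gamma_0X+\sum_{i\ge1}q(\gamma_i)X^{p^i}$ and $q$ sets $\epsilon=0$. $\rho_0(\sum\alpha_iX^{p^i})=\alpha_0X+\sum_{i\ge1}\alpha_i^pX^{p^i}$ and, for $k\ge1$, $\rho_k(\sum\alpha_iX^{p^i})=X+\sum_{i\ge1}\alpha_i^pX^{p^i}$.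 (For $p=2$ read $p^i$ as $2^i$.) *)

From mathcomp Require Import all_boot all_order all_algebra.
Set Implicit Arguments. Unset Strict Implicit. Unset Printing Implicit Defensive.
Import Order.TTheory GRing.Theory Num.Theory.
Local Open Scope ring_scope.

(* A graded commutative F_p-algebra A : a (possibly non-commutative) ring R
   with homogeneous components hom n (n : int) forming a direct-sum grading,
   1 in degree 0, A_m A_n <= A_(m+n), ab = (-1)^(deg a deg b) ba for
   homogeneous a b, and p = 0 in R. *)
Definition graded_comm_Fp_alg (p : nat) (R : pzRingType) (hom : int -> pred R)
  : Prop :=
  p%:R = 0 :> R /\
      (forall n, hom n 0 /\ (forall x y, hom n x -> hom n y -> hom n (x - y))) /\
      hom 0 1 /\
      (forall (m n : int) x y, hom m x -> hom n y -> hom (m + n) (x * y)) /\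
      (forall (m n : int) x y, hom m x -> hom n y ->
        x * y = (-1) ^+ (absz (m * n)) * (y * x)) /\
      (forall x, exists (s : seq int) (f : int -> R),
        (forall n, hom n (f n)) /\ x = \sum_(n <- s) f n) /\
      (forall (s : seq int) (f : int -> R), uniq s -> (forall n, hom n (f n)) ->
        \sum_(n <- s) f n = 0 -> forall n, n \in s -> f n = 0).

(* Elements of A[eps]/(eps^2), deg eps = -1, are written a + b eps as pairs
   (a, b).  For homogeneous elements, x of any degree and y of degree d
   (i.e. y.1 in A_d, y.2 in A_(d+1)), the graded commutative product is
   (a + b eps)(c + e eps) = ac + (ae + (-1)^d bc) eps. *)
Definition emul (R : pzRingType) (d : int) (x y : R * R) : R * R :=
  (x.1 * y.1, x.1 * y.2 + (-1) ^+ (absz d) * (x.2 * y.1)).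

Definition epow (R : pzRingType) (d : int) (x : R * R) (n : nat) : R * R :=
  iter n (fun z => emul d z x) (1, 0).

Definition ehom (R : pzRingType) (hom : int -> pred R) (d : int) (x : R * R) :=
  hom d x.1 /\ hom (d + 1) x.2.

(* Power series sum_i alpha_i X^(p^i) are represented by their coefficient
   sequences i |-> alpha_i. *)

(* The series X (identity of every group below), coefficients in A. *)
Definition seriesX (R : pzRingType) : nat -> R :=
  fun i => if i == 0%N then 1 else 0.
Definition eseriesX (R : pzRingType) : nat -> R * R :=
  fun i => if i == 0%N then (1, 0) else (0, 0).

Definition G2 (R : pzRingType) (hom : int -> pred R) (a : nat -> R) : Prop :=
  a 0%N = 1 /\ forall i, hom (2 ^ i - 1)%N (a i).

Definition Godd (p : nat) (R : pzRingType) (hom : int -> pred R)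
    (a : nat -> R * R) : Prop :=
  (a 0%N).1 = 1 /\ forall i, ehom hom (2 * (p ^ i - 1))%N (a i).

(* G_p^<k>(A) for p = 2 (k >= 1) or k >= 2 : alpha_i in A of degree
   2^(i+k) - 2^k (p = 2), resp. 2(p^(i+k) - p^k) (p odd), alpha_0 = 1. *)
Definition degk (p k i : nat) : nat :=
  if p == 2%N then (2 ^ (i + k) - 2 ^ k)%N else (2 * (p ^ (i + k) - p ^ k))%N.

Definition Gk (p k : nat) (R : pzRingType) (hom : int -> pred R)
    (a : nat -> R) : Prop :=
  a 0%N = 1 /\ forall i, hom (degk p k i) (a i).

(* G_p^<1>(A), p odd : alpha_0 in A[eps]/(eps^2) with alpha_0 - 1 in (eps)
   (of degree 0), alpha_i in A (embedded as alpha_i + 0 eps) of degree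
   2(p^(i+1) - p) for i >= 1. *)
Definition G1odd (p : nat) (R : pzRingType) (hom : int -> pred R)
    (a : nat -> R * R) : Prop :=
  [/\ (a 0%N).1 = 1, ehom hom 0 (a 0%N)
    & forall i, (0 < i)%N -> (a i).2 = 0 /\ hom (2 * (p ^ (i + 1) - p))%N (a i).1].

Definition rho0_2 (R : pzRingType) (a : nat -> R) : nat -> R :=
  fun i => if i == 0%N then a 0%N else a i ^+ 2.

Definition rho0_odd (p : nat) (R : pzRingType) (a : nat -> R * R) : nat -> R * R :=
  fun i => if i == 0%N then a 0%N else epow (2 * (p ^ i - 1))%N (a i) p.

Definition rhok (p : nat) (R : pzRingType) (a : nat -> R) : nat -> R :=
  fun i => if i == 0%N then 1 else a i ^+ p.

Definition rho1_odd (p : nat) (R : pzRingType) (a : nat -> R * R) : nat -> R :=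
  fun i => if i == 0%N then 1 else (a i).1 ^+ p.

From mathcomp Require Import all_boot all_order all_algebra.
From Stdlib Require Import FunctionalExtensionality.
Import GRing.Theory.
Local Open Scope ring_scope.

(* Every rho_k keeps (or resets to 1) the coefficient of X and raises the
   coefficients of X^(p^i), i >= 1, to the p-th power, while the neutral
   element X has coefficients 1, 0, 0, ...  Comparing coefficients, alpha lies
   in the kernel exactly when its transformed leading coefficient is 1 and
   alpha_i^p = 0 for i >= 1. *)

Lemma eq_head_tail_seq (T : Type) (c x0 x1 : T) (g : nat -> T) :
  (fun i => if i == 0%N then c else g i) = (fun i => if i == 0%N then x0 else x1)
  <-> c = x0 /\ forall i, (0 < i)%N -> g i = x1.
Proof.
split=> [eq_cg | [-> eq_g]].
- split=> [|[//|i] _]; first exact: (congr1 (fun f => f 0%N) eq_cg).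
  exact: (congr1 (fun f => f i.+1) eq_cg).
- by apply: functional_extensionality => -[|i] //=; apply: eq_g.
Qed.

Lemma eq_tail_seq (T : Type) (x0 x1 : T) (g : nat -> T) :
  (fun i => if i == 0%N then x0 else g i) = (fun i => if i == 0%N then x0 else x1)
  <-> forall i, (0 < i)%N -> g i = x1.
Proof.
have [to_eq of_eq] := @eq_head_tail_seq T x0 x0 x1 g.
by split=> [/to_eq[] | eq_g]; last exact: of_eq.
Qed.

Theorem proposition4p4 (p : nat) (R : pzRingType) (hom : int -> pred R) :
  prime p -> graded_comm_Fp_alg p hom ->
  [/\ (* (1), p = 2 *)
      (p = 2%N -> forall a, G2 hom a ->
         (rho0_2 a = seriesX R <->
          a 0%N = 1 /\ forall i, (0 < i)%N -> a i ^+ 2 = 0)),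
      (* (1), p odd *)
      (odd p -> forall a, Godd p hom a ->
         (rho0_odd p a = eseriesX R <->
          a 0%N = (1, 0) /\
          forall i, (0 < i)%N -> epow (2 * (p ^ i - 1))%N (a i) p = (0, 0))),
      (* (2), p = 2 *)
      (p = 2%N -> forall a, Gk 2 1 hom a ->
         (rhok 2 a = seriesX R <-> forall i, (0 < i)%N -> a i ^+ 2 = 0)),
      (* (2), p odd *)
      (odd p -> forall a, G1odd p hom a ->
         (rho1_odd p a = seriesX R <-> forall i, (0 < i)%N -> (a i).1 ^+ p = 0))
    & (* (3), k >= 2, any p *)
      (forall k, (2 <= k)%N -> forall a, Gk p k hom a ->
         (rhok p a = seriesX R <-> forall i, (0 < i)%N -> a i ^+ p = 0))].
Proof.
move=> _ _; split=> [_ a _|_ a _|_ a _|_ a _|k _ a _].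
- exact: eq_head_tail_seq.
- exact: eq_head_tail_seq.
- exact: eq_tail_seq.
- exact: eq_tail_seq.
- exact: eq_tail_seq.
Qed.
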